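(* Let $V$ and $W$ be Banach spaces, let $\mathcal A\subset\mathcal L(V,W)$ be bounded and let $T\in\mathcal L(W,V)$ be compact. Set $\mathcal B:=\{I+T\circ A: A\in\mathcal A\}$. Assume that each $B\in\mathcal B$ is an isomorphism of $V$ and that $\mathcal A$ is sequentially compact in the weak operator topology of $\mathcal L(V,W)$. Then $\sup_{B\in\mathcal B}\|B^{-1}\|_{\mathcal L(V)}<+\infty$. In particular, there exists $\kappa>0$ such that $\inf_{B\in\mathcal B}\mathfrak C(B)\ge\kappa$.
   Context: The weak operator topology on $\mathcal L(V,W)$ is the coarsest topology making all maps $A\mapsto\langle h,Av\rangle_{W',W}$ ($v\in V$, $h\in W'$) continuous; sequential compactness of $\mathcal A$ means every sequence in $\mathcal A$ has a subsequence $A_n$ and some $A\in\mathcal A$ with $\langle h,A_nv\rangle\to\langle h,Av\rangle$ for all $v\in V,h\in W'$. For $B\in\mathcal L(V)$, the Banach constant $\mathfrak C(B)$ is the supremum of all $\kappa>0$ with $B_V(0,\kappa)\subset B(B_V(0,1))$ (closed balls) if $B$ is surjective, and $0$ otherwise. *)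

From HB Require Import structures.
From mathcomp Require Import all_boot all_order all_algebra.
From mathcomp Require Import all_classical all_reals all_analysis.
Set Implicit Arguments. Unset Strict Implicit. Unset Printing Implicit Defensive.
Import Order.TTheory GRing.Theory Num.Theory.
Import numFieldNormedType.Exports.
Local Open Scope classical_set_scope.
Local Open Scope ring_scope.

Section Defs.
Context {R : realType}.

Definition bounded_op {V W : normedModType R} (f : V -> W) : Prop :=
  linear f /\ continuous f.

Definition cball0 {V : normedModType R} (r : R) : set V := [set v | `|v| <= r].

Definition opnorm {V W : normedModType R} (f : V -> W) : \bar R :=
  ereal_sup [set (`|f v|)%:E | v in cball0 1].

Definition compact_op {V W : normedModType R} (T : V -> W) : Prop :=
  bounded_op T /\ compact (closure (T @` cball0 1)).

Definition iso_inverse {V : normedModType R} (B Binv : V -> V) : Prop :=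
  bounded_op Binv /\ (forall v, Binv (B v) = v) /\ (forall v, B (Binv v) = v).

Definition is_iso {V : normedModType R} (B : V -> V) : Prop :=
  bounded_op B /\ exists Binv, iso_inverse B Binv.

Definition dual_elt {W : normedModType R} (h : W -> R^o) : Prop :=
  linear h /\ continuous h.

Definition wot_seq_compact {V W : normedModType R} (A : set (V -> W)) : Prop :=
  forall a : nat -> (V -> W), (forall n, A (a n)) ->
    exists (phi : nat -> nat) (L : V -> W),
      {homo phi : m n / (m < n)%N >-> (m < n)%N} /\ A L /\
      forall (v : V) (h : W -> R^o), dual_elt h ->
        (fun n => h (a (phi n) v)) @ \oo --> h (L v).

Definition banach_const {V : normedModType R} (B : V -> V) : \bar R :=
  if `[< forall w : V, exists v, B v = w >] then
    ereal_sup [set k%:E | k in [set k : R | 0 < k /\ cball0 k `<=` B @` cball0 1]]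
  else 0%E.

End Defs.

From HB Require Import structures.
From mathcomp Require Import all_boot all_order all_algebra.
From mathcomp Require Import all_classical all_reals all_analysis.
Import Order.TTheory GRing.Theory Num.Theory.
Import numFieldNormedType.Exports.
From mathcomp Require Import ring lra.
Local Open Scope classical_set_scope.
Local Open Scope ring_scope.

(* If the inverses of [I + T a] were unbounded, there would be [a_n] in [A] and
   unit vectors [v_n] with [v_n + T a_n v_n -> 0]. Pass to a subsequence along
   which [a_n] tends to some [L] in [A] in the weak operator topology. As [T] is
   compact, [T a_n v_n] has a cluster point [y]; near it [v_n] is close to [-y],
   so [y <> 0], and [T a_n y] is close to [-y]. Testing against the functionals
   [g o T] with [g] in [V'] gives [g (y + T L y) = 0], hence [y + T L y = 0] by
   Hahn-Banach, contradicting the injectivity of [I + T L]. A uniform bound [M]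
   on the inverses makes the ball of radius [1/M] lie in the image of the unit
   ball under each [I + T a]. *)

Section LinearFunctions.
Context {R : pzRingType} {U V : lmodType R} {f : U -> V} (lf : linear f).

Definition linear_of : {linear U -> V} :=
  HB.pack f (GRing.isLinear.Build R U V *:%R f lf).

Lemma lin0 : f 0 = 0.
Proof. exact: (linear0 linear_of). Qed.

Lemma linD x y : f (x + y) = f x + f y.
Proof. exact: (linearD linear_of). Qed.

Lemma linZ t x : f (t *: x) = t *: f x.
Proof. exact: (linearZZ linear_of). Qed.

Lemma linN x : f (- x) = - f x.
Proof. exact: (linearN linear_of). Qed.

Lemma linB x y : f (x - y) = f x - f y.
Proof. exact: (linearB linear_of). Qed.

End LinearFunctions.

Lemma continuous_linear_normM {R : realFieldType} {V W : normedModType R}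
    (f : V -> W) (lf : linear f) : continuous f ->
  exists2 C, 0 < C & forall x, `|f x| <= C * `|x|.
Proof.
move=> /(linear_bounded_continuous (linear_of lf)).2 /linear_boundedP.
by move=> /pinfty_ex_gt0 [C C_gt0 fC]; exists C.
Qed.

Lemma opnorm_le_normM {R : realType} {V W : normedModType R} (f : V -> W) M :
  linear f -> (opnorm f <= M%:E)%E -> forall x, `|f x| <= M * `|x|.
Proof.
move=> lf fM x; have [->|x_neq0] := eqVneq x 0.
  by rewrite lin0 // !normr0 mulr0.
have nx_gt0 : 0 < `|x| by rewrite normr_gt0.
have : `|f (`|x|^-1 *: x)| <= M.
  rewrite -lee_fin; apply: le_trans fM; apply: ereal_sup_ubound.
  exists (`|x|^-1 *: x) => //.
  by rewrite /cball0 /= normrZ gtr0_norm ?invr_gt0 // mulVf ?gt_eqF.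
rewrite linZ // normrZ gtr0_norm ?invr_gt0 // => fxM.
by rewrite -ler_pdivrMr // mulrC.
Qed.

Lemma Zorn_bigcup_nonempty T (P : set (set T)) (G0 : set T) :
  P G0 -> G0 !=set0 ->
  (forall F, F `<=` P -> F !=set0 -> total_on F subset ->
    P (\bigcup_(X in F) X)) ->
  exists A, P A /\ forall B, A `<` B -> ~ P B.
Proof.
move=> PG0 [p0 G0p0] Pchain.
(* [Zorn_bigcup] also covers the empty chain, so adjoin [set0] to [P] *)
have [F FP Ftot|A [[PA|A0] Amax]] := @Zorn_bigcup T (fun X => P X \/ X = set0).
- have [[X FX [p Xp]]|F0] := pselect (exists2 X, F X & X !=set0); last first.
    right; apply/seteqP; split => // p [X FX Xp]; apply: F0.
    by exists X => //; exists p.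
  left; have -> : \bigcup_(X in F) X = \bigcup_(X in F `&` P) X.
    apply/seteqP; split => q [Y FY Yq]; last by exists Y => //; case: FY.
    exists Y => //; split => //; case: (FP _ FY) => // Y0.
    by rewrite Y0 in Yq.
  apply: Pchain.
  + by move=> Y [].
  + exists X; split => //; case: (FP _ FX) => // X0.
    by rewrite X0 in Xp.
  + by move=> Y Z [FY _] [FZ _]; exact: Ftot.
- by exists A; split => // B AB PB; apply: (Amax B AB); left.
- exfalso; apply: (Amax G0); last by left.
  by rewrite A0; split; [exact: sub0set | move/(_ p0 G0p0)].
Qed.

Section HahnBanach.
Context {R : realType} {V : normedModType R}.

(* Graphs of linear functionals defined on a subspace of [V] and dominated by
   the norm; working with relations avoids dependently typed domains. *)
Definition dominated_graph (G : set (V * R)) :=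
  [/\ G (0, 0),
   forall x a y b, G (x, a) -> G (y, b) -> G (x + y, a + b),
   forall t x a, G (x, a) -> G (t *: x, t * a),
   forall x a b, G (x, a) -> G (x, b) -> a = b &
   forall x a, G (x, a) -> a <= `|x| ].

Definition graph_ext (G : set (V * R)) (z : V) (c : R) : set (V * R) :=
  [set p | exists y a t, G (y, a) /\ p = (y + t *: z, a + t * c)].

Section Extension.
Variables (G : set (V * R)) (z : V) (c : R).
Hypotheses (domG : dominated_graph G)
  (c_lb : forall u a, G (u, a) -> a - `|u - z| <= c)
  (c_ub : forall w b, G (w, b) -> c <= `|w + z| - b).

Lemma graph_ext_le_norm y a t : G (y, a) -> a + t * c <= `|y + t *: z|.
Proof.
case: domG => _ _ GZ _ GB Gya.
have [t_lt0|t_gt0|->] := ltgtP t 0; last first.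
- by rewrite scale0r mul0r !addr0; exact: GB.
- have := c_ub _ _ (GZ t^-1 _ _ Gya).
  have -> : y + t *: z = t *: (t^-1 *: y + z).
    by rewrite scalerDr scalerA mulfV ?gt_eqF // scale1r.
  rewrite normrZ gtr0_norm // -(ler_pM2l t_gt0) mulrBr mulrA mulfV ?gt_eqF //.
  lra.
- have nt_gt0 : 0 < - t by rewrite oppr_gt0.
  have := c_lb _ _ (GZ (- t)^-1 _ _ Gya).
  have -> : y + t *: z = (- t) *: ((- t)^-1 *: y - z).
    by rewrite scalerBr scalerA mulfV ?gt_eqF // scale1r scaleNr opprK.
  rewrite normrZ gtr0_norm // -(ler_pM2l nt_gt0) mulrBr mulrA mulfV ?gt_eqF //.
  lra.
Qed.

Lemma dominated_graph_ext : (forall a, ~ G (z, a)) ->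
  dominated_graph (graph_ext G z c).
Proof.
move=> z_notin; case: domG => G0 GD GZ GF GB; split.
- by exists 0, 0, 0; split => //; rewrite scale0r mul0r !addr0.
- move=> _ _ _ _ [y1 [a1 [t1 [G1 [-> ->]]]]] [y2 [a2 [t2 [G2 [-> ->]]]]].
  exists (y1 + y2), (a1 + a2), (t1 + t2); split; first exact: GD.
  by congr pair; [rewrite scalerDl addrACA | ring].
- move=> s _ _ [y [a [t [Gya [-> ->]]]]].
  exists (s *: y), (s * a), (s * t); split; first exact: GZ.
  by congr pair; [rewrite scalerDr scalerA | ring].
- move=> x _ _ [y1 [a1 [t1 [G1 [e1 ->]]]]] [y2 [a2 [t2 [G2 [e2 ->]]]]].
  have e12 : y1 + t1 *: z = y2 + t2 *: z by rewrite -e1 -e2.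
  have [t12|t12] := eqVneq t1 t2.
    move: e12; rewrite t12 => /addIr y12.
    by move: G1; rewrite y12 => /GF /(_ G2) ->.
  (* otherwise [z] is a combination of [y1] and [y2], so in the domain of [G] *)
  exfalso; apply: (z_notin ((t1 - t2)^-1 * (a2 - a1))).
  have -> : z = (t1 - t2)^-1 *: (y2 - y1).
    apply: (scalerI (_ : t1 - t2 != 0)); first by rewrite subr_eq0.
    rewrite scalerA mulfV ?subr_eq0 // scale1r scalerBl.
    have -> : y2 = y1 + t1 *: z - t2 *: z by rewrite e12 addrK.
    by rewrite addrAC [y1 + _]addrC addrK.
  apply: (GZ); apply: GD G2 _.
  by have := GZ (-1) _ _ G1; rewrite scaleN1r mulN1r.
- by move=> _ _ [y [a [t [Gya [-> ->]]]]]; exact: graph_ext_le_norm.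
Qed.

End Extension.

Lemma graph_ext_bound (G : set (V * R)) z : dominated_graph G ->
  exists c, (forall u a, G (u, a) -> a - `|u - z| <= c) /\
            (forall w b, G (w, b) -> c <= `|w + z| - b).
Proof.
case=> G0 GD _ _ GB.
have lb_le_ub u a w b : G (u, a) -> G (w, b) -> a - `|u - z| <= `|w + z| - b.
  move=> Gua Gwb; have := GB _ _ (GD _ _ _ _ Gua Gwb).
  have -> : u + w = (u - z) + (w + z) by rewrite addrACA addNr addr0.
  move=> uw_le.
  by have := ler_normD (u - z) (w + z); lra.
pose S := [set r | exists u a, G (u, a) /\ r = a - `|u - z|].
have S_sup : has_sup S.
  split; first by exists (0 - `|0 - z|), 0, 0.
  by exists (`|0 + z| - 0) => _ [u [a [Gua ->]]]; exact: lb_le_ub.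
exists (sup S); split.
- by move=> u a Gua; apply: sup_upper_bound => //; exists u, a.
- move=> w b Gwb; apply: ge_sup => //; first by case: S_sup.
  by move=> _ [u [a [Gua ->]]]; exact: lb_le_ub.
Qed.

Lemma dominated_graph_span (x0 : V) : x0 != 0 ->
  dominated_graph [set (t *: x0, t * `|x0|) | t in [set: R]].
Proof.
move=> x0_neq0; split.
- by exists 0 => //; rewrite scale0r mul0r.
- move=> _ _ _ _ [t _ [<- <-]] [s _ [<- <-]].
  by exists (t + s) => //; rewrite scalerDl mulrDl.
- move=> s _ _ [t _ [<- <-]].
  by exists (s * t) => //; rewrite scalerA mulrA.
- move=> x _ _ [t _ [tx <-]] [s _ [sx <-]].
  have : (t - s) *: x0 = 0 by rewrite scalerBl tx sx subrr.
  by move/eqP; rewrite scaler_eq0 (negbTE x0_neq0) orbF subr_eq0 => /eqP ->.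
- move=> _ _ [t _ [<- <-]].
  by rewrite normrZ ler_wpM2r // ler_norm.
Qed.

Lemma dominated_graph_bigcup (F : set (set (V * R))) :
  F `<=` dominated_graph -> F !=set0 -> total_on F subset ->
  dominated_graph (\bigcup_(X in F) X).
Proof.
move=> Fdom [X0 FX0] Ftot.
have common p q X Y : F X -> F Y -> X p -> Y q ->
    exists2 Z, F Z & dominated_graph Z /\ Z p /\ Z q.
  move=> FX FY Xp Yq; have [XY|YX] := Ftot _ _ FX FY.
  - by exists Y => //; split; [exact: Fdom | split => //; exact: XY].
  - by exists X => //; split; [exact: Fdom | split => //; exact: YX].
split.
- by exists X0 => //; case: (Fdom _ FX0).
- move=> x a y b [X FX Xp] [Y FY Yq].
  have [Z FZ [[_ ZD _ _ _] [Zp Zq]]] := common _ _ _ _ FX FY Xp Yq.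
  by exists Z => //; exact: ZD.
- move=> t x a [X FX Xp]; exists X => //.
  by case: (Fdom _ FX) => _ _ XZ _ _; exact: XZ.
- move=> x a b [X FX Xp] [Y FY Yq].
  have [Z FZ [[_ _ _ ZF _] [Zp Zq]]] := common _ _ _ _ FX FY Xp Yq.
  exact: ZF Zp Zq.
- move=> x a [X FX Xp].
  by case: (Fdom _ FX) => _ _ _ _ XB; exact: XB Xp.
Qed.

Lemma maximal_dominated_graph_total (A : set (V * R)) : dominated_graph A ->
  (forall B, A `<` B -> ~ dominated_graph B) -> forall z, exists a, A (z, a).
Proof.
move=> domA Amax z; apply: contrapT => z_undef.
have z_notin a : ~ A (z, a) by move=> Aza; apply: z_undef; exists a.
have [c [c_lb c_ub]] := graph_ext_bound A z domA.
apply: (Amax (graph_ext A z c)); last exact: dominated_graph_ext.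
split; first by move=> [y a] Aya; exists y, a, 0; rewrite scale0r mul0r !addr0.
move=> ext_sub; apply: (z_notin c); apply: ext_sub.
exists 0, 0, 1; split; first by case: domA.
by rewrite scale1r mul1r !add0r.
Qed.

Lemma total_dominated_graph_dual (A : set (V * R)) : dominated_graph A ->
  (forall z, exists a, A (z, a)) ->
  exists g : V -> R^o, dual_elt g /\ forall x, A (x, g x).
Proof.
case=> _ AD AZ AF AB Atot.
pose g (x : V) : R^o := sval (cid (Atot x)).
have Ag x : A (x, g x) by rewrite /g; case: cid.
have lg : linear g.
  by move=> t u v; apply: AF (Ag _) _; apply: AD (AZ _ _ _ (Ag u)) (Ag v).
have g_le w : `|g w| <= `|w|.
  rewrite ler_norml AB ?andbT //.
  by rewrite lerNl -(linN lg) -normrN; exact: AB.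
exists g; split => //; split => // x.
apply/cvgrPdist_lt => e e_gt0; apply/nbhs_normP; exists e => //= y xy_lt.
by rewrite -(linB lg); exact: le_lt_trans (g_le _) xy_lt.
Qed.

Lemma dual_separates (x0 : V) : x0 != 0 ->
  exists g : V -> R^o, dual_elt g /\ g x0 != 0.
Proof.
move=> x0_neq0.
pose P (G : set (V * R)) := dominated_graph G /\ G (x0, `|x0|).
have [A [[domA Ax0] Amax]] : exists A, P A /\ forall B, A `<` B -> ~ P B.
  apply: (@Zorn_bigcup_nonempty _ P [set (t *: x0, t * `|x0|) | t in [set: R]]).
  - split; first exact: dominated_graph_span.
    by exists 1 => //; rewrite scale1r mul1r.
  - by exists (0, 0), 0 => //; rewrite scale0r mul0r.
  - move=> F FP [X FX] Ftot; split; last by exists X => //; case: (FP _ FX).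
    by apply: dominated_graph_bigcup => //; [move=> Y /FP [] | exists X].
have Atot : forall z, exists a, A (z, a).
  apply: maximal_dominated_graph_total => // B AB domB.
  by apply: (Amax B AB); split => //; apply: AB.1.
have [g [dg Ag]] := total_dominated_graph_dual A domA Atot.
exists g; split => //.
by case: domA => _ _ _ AF _; rewrite (AF _ _ _ (Ag x0) Ax0) normr_eq0.
Qed.

Lemma dual_eq0 (u : V) :
  (forall g : V -> R^o, dual_elt g -> g u = 0) -> u = 0.
Proof.
move=> u_ker; apply/eqP; apply: contrapT => /negP /dual_separates [g [dg gu]].
by move: gu; rewrite u_ker ?eqxx.
Qed.

End HahnBanach.

Lemma compact_op_cluster {R : realType} {V W : normedModType R}
    (T : W -> V) (x : nat -> W) c :
  compact_op T -> 0 < c -> (forall n, `|x n| <= c) ->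
  exists y, forall (P : set nat) d, (\forall n \near \oo, P n) -> 0 < d ->
    exists2 n, P n & `|y - T (x n)| < d.
Proof.
move=> [[lT _] K_compact] c_gt0 x_le.
pose z n := T (c^-1 *: x n).
have Kz : (z @ \oo) (closure (T @` cball0 1)).
  exists 0%N => // n _; apply: subset_closure; exists (c^-1 *: x n) => //.
  by rewrite /cball0 /= normrZ gtr0_norm ?invr_gt0 // ler_pdivrMl // mulr1.
have [y0 [_ y0_cluster]] := K_compact _ _ Kz.
exists (c *: y0) => P d P_near d_gt0.
have zP : (z @ \oo) (z @` P) by apply: filterS P_near => n Pn; exists n.
have y0_ball : nbhs y0 (ball y0 (d / c)).
  by apply: nbhsx_ballx; rewrite divr_gt0.
have [_ [[n Pn <-]]] := y0_cluster _ _ zP y0_ball.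
rewrite -ball_normE /= => y0zn; exists n => //.
have -> : T (x n) = c *: z n.
  by rewrite /z linZ // scalerA mulfV ?gt_eqF // scale1r.
by rewrite -scalerBr normrZ gtr0_norm // -ltr_pdivlMl // mulrC.
Qed.

Section WeakLimitKernel.
Context {R : realType} {V W : normedModType R}.
Variables (T : W -> V) (a_ : nat -> V -> W) (L : V -> W) (v_ : nat -> V).
Variables (c : R) (y : V).
Hypotheses (lT : linear T) (cT : continuous T) (c_gt0 : 0 < c)
  (a_lin : forall n, linear (a_ n))
  (a_le : forall n x, `|a_ n x| <= c * `|x|)
  (a_wot : forall v (h : W -> R^o), dual_elt h ->
     (fun n => h (a_ n v)) @ \oo --> h (L v))
  (v_norm : forall n, `|v_ n| = 1)
  (Bv_cvg0 : (fun n => v_ n + T (a_ n (v_ n))) @ \oo --> 0)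
  (y_cluster : forall (P : set nat) d, (\forall n \near \oo, P n) -> 0 < d ->
     exists2 n, P n & `|y - T (a_ n (v_ n))| < d).

Lemma cluster_approx (P : set nat) e : (\forall n \near \oo, P n) -> 0 < e ->
  exists n, [/\ P n, `|v_ n + y| <= e & `|y + T (a_ n y)| <= e].
Proof.
move=> P_near e_gt0.
have [C C_gt0 T_le] := continuous_linear_normM _ lT cT.
have Cc_ge0 : 0 <= C * c by rewrite mulr_ge0 ?ltW.
pose eta := e / (2 * (C * c + 1)).
have eta_gt0 : 0 < eta by rewrite divr_gt0 // mulr_gt0 // ltr_wpDl.
have eta_e : eta * (2 * (C * c + 1)) = e.
  by rewrite divfK // mulf_neq0 // gt_eqF // ltr_wpDl.
have P_small : \forall n \near \oo, P n /\ `|v_ n + T (a_ n (v_ n))| < eta.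
  by near=> n; split; [near: n | near: n; exact: cvgr0_norm_lt].
have [n [Pn Bv_lt] y_lt] := y_cluster _ _ P_small eta_gt0.
have vy_le : `|v_ n + y| <= 2 * eta.
  have -> : v_ n + y = (v_ n + T (a_ n (v_ n))) + (y - T (a_ n (v_ n))).
    by rewrite addrACA subrr addr0.
  by apply: le_trans (ler_normD _ _) _; lra.
exists n; split => //; first by apply: le_trans vy_le _; nra.
have -> : y + T (a_ n y) = (y - T (a_ n (v_ n))) + T (a_ n (v_ n + y)).
  by rewrite (linD (a_lin n)) (linD lT) addrA subrK.
apply: le_trans (ler_normD _ _) _.
have := le_trans (T_le _) (ler_wpM2l (ltW C_gt0) (a_le n (v_ n + y))).
have : C * (c * `|v_ n + y|) <= C * c * (2 * eta).
  by rewrite -[X in _ <= X]mulrA !ler_pM2l.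
nra.
Unshelve. all: by end_near.
Qed.

Lemma cluster_neq0 : y != 0.
Proof.
apply/negP => /eqP y0.
have half_gt0 : 0 < 1 / 2 :> R by rewrite divr_gt0.
have [n [_ + _]] := @cluster_approx setT _ filterT half_gt0.
by rewrite y0 addr0 v_norm; lra.
Qed.

Lemma cluster_kernel : y + T (L y) = 0.
Proof.
apply: dual_eq0 => g [lg cg].
have [C C_gt0 g_le] := continuous_linear_normM _ lg cg.
have dgT : dual_elt (g \o T).
  split; first by move=> t u w /=; rewrite lT lg.
  by move=> x; apply: continuous_comp; [exact: cT | exact: cg].
apply/eqP; rewrite -normr_le0; apply/ler_addgt0Pr => e e_gt0; rewrite add0r.
have e2_gt0 : 0 < e / 2 by rewrite divr_gt0.
have /cvgrPdist_lt /(_ _ e2_gt0) gTa_near := a_wot y _ dgT.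
have [n [gTa_lt _ yTa_le]] :=
  cluster_approx _ _ gTa_near (divr_gt0 e2_gt0 C_gt0).
have -> : g (y + T (L y)) =
    g (y + T (a_ n y)) + (g (T (L y)) - g (T (a_ n y))).
  by rewrite !(linD lg) addrA addrAC addrK.
apply: le_trans (ler_normD _ _) _.
have : `|g (y + T (a_ n y))| <= e / 2.
  apply: le_trans (g_le _) _.
  by rewrite -ler_pdivlMl // mulrC.
move: gTa_lt => /= /ltW; lra.
Qed.

End WeakLimitKernel.

Lemma weak_limit_kernel {R : realType} {V W : normedModType R}
    (T : W -> V) (a_ : nat -> V -> W) (L : V -> W) (v_ : nat -> V) c :
  compact_op T -> 0 < c ->
  (forall n, linear (a_ n)) -> (forall n x, `|a_ n x| <= c * `|x|) ->
  (forall v (h : W -> R^o), dual_elt h ->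
     (fun n => h (a_ n v)) @ \oo --> h (L v)) ->
  (forall n, `|v_ n| = 1) ->
  (fun n => v_ n + T (a_ n (v_ n))) @ \oo --> 0 ->
  exists2 y, y != 0 & y + T (L y) = 0.
Proof.
move=> Tc c_gt0 a_lin a_le a_wot v_norm Bv_cvg0; have [[lT cT] _] := Tc.
have av_le n : `|a_ n (v_ n)| <= c by rewrite -[c]mulr1 -(v_norm n) a_le.
have [y /= y_cluster] :=
  compact_op_cluster T (fun n => a_ n (v_ n)) c Tc c_gt0 av_le.
exists y.
- exact: (cluster_neq0 _ _ _ _ _
    lT cT c_gt0 a_lin a_le v_norm Bv_cvg0 y_cluster).
- exact: (cluster_kernel _ _ _ _ _ _
    lT cT c_gt0 a_lin a_le a_wot Bv_cvg0 y_cluster).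
Qed.

Lemma harmonic_subseq_cvg0 {R : archiRealFieldType} {V : normedModType R}
    (u : nat -> V) (phi : nat -> nat) :
  {homo phi : m n / (m < n)%N >-> (m < n)%N} ->
  (forall n, `|u n| <= harmonic n) -> u \o phi @ \oo --> 0.
Proof.
move=> phi_incr u_le; apply/cvgr0Pnorm_lt => e e_gt0.
have phi_ge n : (n <= phi n)%N.
  by elim: n => // n IH; exact: leq_ltn_trans IH (phi_incr _ _ (ltnSn n)).
have /cvgr0Pnorm_lt /(_ _ e_gt0) := @cvg_harmonic R.
apply: filterS => n /= harm_lt; apply: le_lt_trans (u_le _) _.
apply: le_lt_trans harm_lt; rewrite ger0_norm // lef_pV2 ?posrE //.
by rewrite ler_nat ltnS.
Qed.

Lemma iso_inverse_linear {R : realType} {V : normedModType R}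
    (B Binv : V -> V) :
  iso_inverse B Binv -> linear B.
Proof.
move=> [[lBinv _] [BinvK BK]] t x y.
by rewrite -{1}(BinvK x) -{1}(BinvK y) -lBinv BK.
Qed.

Lemma iso_inverse_opnorm_gt {R : realType} {V : normedModType R}
    (B Binv : V -> V) r :
  iso_inverse B Binv -> 0 < r -> (r%:E < opnorm Binv)%E ->
  exists v, `|v| = 1 /\ `|B v| <= r^-1.
Proof.
move=> BBinv r_gt0 /ereal_sup_gt [_ [u u_le1 <-]]; rewrite lte_fin => r_lt.
have [_ [_ BK]] := BBinv.
set w := Binv u in r_lt; have w_gt0 : 0 < `|w| by apply: lt_trans r_lt.
exists (`|w|^-1 *: w); split.
  by rewrite normrZ gtr0_norm ?invr_gt0 // mulVf ?gt_eqF.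
rewrite (linZ (iso_inverse_linear _ _ BBinv)) /w BK.
rewrite normrZ gtr0_norm ?invr_gt0 //.
apply: le_trans (ler_wpM2l _ u_le1) _; first by rewrite invr_ge0 ltW.
by rewrite mulr1 lef_pV2 ?posrE // ltW.
Qed.

Lemma inverse_opnorm_uniform_bound {R : realType} {V W : normedModType R}
    (A : set (V -> W)) (T : W -> V) :
  (forall a, A a -> bounded_op a) ->
  (exists M : R, forall a, A a -> (opnorm a <= M%:E)%E) ->
  compact_op T ->
  (forall a, A a -> is_iso (fun v => v + T (a v))) ->
  wot_seq_compact A ->
  exists M : R, forall a, A a -> forall Binv : V -> V,
    iso_inverse (fun v => v + T (a v)) Binv -> (opnorm Binv <= M%:E)%E.
Proof.
move=> A_bdd [MA A_le] Tc A_iso A_wot; apply: contrapT => unbounded.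
have almost_ker n : exists p : (V -> W) * V,
    [/\ A p.1, `|p.2| = 1 & `|p.2 + T (p.1 p.2)| <= harmonic n].
  apply: contrapT => no_p; apply: unbounded; exists n.+1%:R => a Aa Binv aBinv.
  rewrite leNgt; apply/negP.
  move=> /(iso_inverse_opnorm_gt _ _ _ aBinv (ltr0Sn _ _)) [v [v_norm Bv_le]].
  by apply: no_p; exists (a, v).
have [p /all_and3 [pA p_norm p_le]] := choice almost_ker.
have [phi [L [phi_incr [AL L_wot]]]] := A_wot _ pA.
pose c := Num.max MA 1.
have c_gt0 : 0 < c by rewrite lt_max ltr01 orbT.
have a_le n x : `|(p (phi n)).1 x| <= c * `|x|.
  apply: opnorm_le_normM; first by case: (A_bdd _ (pA (phi n))).
  by apply: le_trans (A_le _ (pA (phi n))) _; rewrite lee_fin le_max lexx.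
have [y y_neq0 y_ker] := weak_limit_kernel T (fun n => (p (phi n)).1) L
  (fun n => (p (phi n)).2) c Tc c_gt0 (fun n => (A_bdd _ (pA (phi n))).1)
  a_le L_wot (fun n => p_norm (phi n))
  (harmonic_subseq_cvg0 (fun n => (p n).2 + T ((p n).1 (p n).2)) phi
     phi_incr p_le).
have [_ [Binv [[lBinv _] [BinvK _]]]] := A_iso _ AL.
by move: y_neq0; rewrite -(BinvK y) y_ker (lin0 lBinv) eqxx.
Qed.

Lemma banach_const_ge_inv {R : realType} {V : normedModType R}
    (B Binv : V -> V) M :
  iso_inverse B Binv -> 0 < M -> (opnorm Binv <= M%:E)%E ->
  (M^-1%:E <= banach_const B)%E.
Proof.
move=> [[lBinv _] [_ BK]] M_gt0 Binv_le.
rewrite /banach_const; case: asboolP => [_|]; last first.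
  by move=> B_not_onto; exfalso; apply: B_not_onto => w; exists (Binv w).
apply: ereal_sup_ubound; exists M^-1 => //; split; first by rewrite invr_gt0.
move=> w w_le; exists (Binv w) => //.
rewrite /cball0 /=; apply: le_trans (opnorm_le_normM _ _ lBinv Binv_le w) _.
by rewrite -ler_pdivlMl // mulr1.
Qed.

Theorem mainTheorem8 (R : realType) (V W : completeNormedModType R)
  (A : set (V -> W)) (T : W -> V) :
  (forall a, A a -> bounded_op a) ->
  (exists M : R, forall a, A a -> (opnorm a <= M%:E)%E) ->
  compact_op T ->
  (forall a, A a -> is_iso (fun v => v + T (a v))) ->
  wot_seq_compact A ->
  (exists M : R, forall a, A a -> forall Binv : V -> V,
      iso_inverse (fun v => v + T (a v)) Binv -> (opnorm Binv <= M%:E)%E) /\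
  (exists kappa : R, 0 < kappa /\
      (kappa%:E <= ereal_inf [set banach_const (fun v => (v + T (a v))%R) | a in A])%E).
Proof.
move=> A_bdd A_le Tc A_iso A_wot.
have [M Binv_le] := inverse_opnorm_uniform_bound _ _ A_bdd A_le Tc A_iso A_wot.
split; first by exists M.
have M1_gt0 : 0 < Num.max M 1 by rewrite lt_max ltr01 orbT.
exists (Num.max M 1)^-1; split; first by rewrite invr_gt0.
apply/ereal_infP => _ [a Aa <-]; have [_ [Binv aBinv]] := A_iso _ Aa.
apply: (banach_const_ge_inv _ _ _ aBinv M1_gt0).
by apply: le_trans (Binv_le _ Aa _ aBinv) _; rewrite lee_fin le_max lexx.
Qed.
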